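(* Let $\mu$ be the morphism on $\{0,1\}^*$ with $\mu(0)=01$, $\mu(1)=10$, let $A=\{00,11,010010,101101\}$ and $\mathcal{A}=\bigcup_{k\ge 0}\mu^k(A)$. Then the set of binary words that are squares and are $7/3$-power-free is exactly the set of conjugates of words in $\mathcal{A}$.
   Context: A finite word $w$ is an $\alpha$-power ($\alpha$ rational) if $w = x^n x'$ with $x$ nonempty, $x'$ a prefix of $x$, and $\alpha = n + |x'|/|x|$. A square is a word $xx$ with $x$ nonempty. A word is $\alpha$-power-free if none of its factors (contiguous subwords) is an $\alpha$-power. A conjugate of a word $x$ is any word $y$ such that $x=uv$ and $y=vu$ for some words $u,v$ (possibly empty). *)

(* Binary words are seq bool, with letter 0 = false, 1 = true. *)
From mathcomp Require Import all_boot all_order all_algebra.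
Set Implicit Arguments. Unset Strict Implicit. Unset Printing Implicit Defensive.
Import Order.TTheory GRing.Theory Num.Theory.

Definition word := seq bool.

Definition mu (w : word) : word := flatten (map (fun b => [:: b; ~~ b]) w).

Definition is_power (alpha : rat) (w : word) : Prop :=
  exists (x x' : word) (n : nat),
    [/\ x != [::], prefix x' x,
        w = flatten (nseq n x) ++ x' &
        alpha = (n%:R + (size x')%:R / (size x)%:R)%R].

Definition power_free (alpha : rat) (w : word) : Prop :=
  forall (y : word) (beta : rat), infix y w -> (alpha <= beta)%R -> ~ is_power beta y.

Definition square (w : word) : Prop := exists x : word, x != [::] /\ w = x ++ x.

Definition conjugate (y x : word) : Prop := exists u v : word, x = u ++ v /\ y = v ++ u.

Definition setA : seq word :=
  [:: [:: false; false]; [:: true; true];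
      [:: false; true; false; false; true; false];
      [:: true; false; true; true; false; true]].

Definition in_calA (x : word) : Prop := exists (k : nat) (a : word), a \in setA /\ x = iter k mu a.

(* A square xx is 7/3-power-free iff x, read circularly, has no factor of
   length at most |x| and exponent at least 7/3.  If such a circular word has
   length at least 7, freeness against the exponents 3, 5/2 and 7/3 shows that
   it contains a double letter and that no two double letters lie at an odd
   distance; so all double letters have the same parity and x is a rotation of
   mu(y) with y free of half the length.  Descending to length at most 6, where
   an exhaustive search applies, x is a rotation of mu^k(a) with a in
   {0, 1, 010, 101} or a in A; the second case is impossible since xx would
   then be a fourth power.  Conversely, a period p of a factor of mu(y) is
   either even, giving a period p/2 of a factor of y, or odd, which cannot
   happen when y has no cube; hence mu preserves circular freeness, and
   mu^k(0), mu^k(1), mu^k(010), mu^k(101) are free. *)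

From mathcomp Require Import all_boot all_order all_algebra.
From mathcomp Require Import zify.
Set Implicit Arguments. Unset Strict Implicit. Unset Printing Implicit Defensive.
Import GRing.Theory Num.Theory.

Lemma size_mu t : size (mu t) = 2 * size t.
Proof. by elim: t => [|b t IH] //=; rewrite -/(mu t) IH; lia. Qed.

Lemma mu_cat u v : mu (u ++ v) = mu u ++ mu v.
Proof. by rewrite /mu map_cat flatten_cat. Qed.

Lemma iter_mu_cat k u v : iter k mu (u ++ v) = iter k mu u ++ iter k mu v.
Proof. by elim: k => //= k ->; rewrite mu_cat. Qed.

Lemma size_iter_mu k a : size (iter k mu a) = 2 ^ k * size a.
Proof. by elim: k => [|k IH] /=; rewrite ?mul1n // size_mu IH expnS mulnA. Qed.

Lemma nth_mu t j : j < 2 * size t ->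
  nth false (mu t) j = if odd j then ~~ nth false t j./2 else nth false t j./2.
Proof.
elim: t j => [|b t IH] [|[|j]] //= Hj.
by rewrite -/(mu t) IH /=; [rewrite negbK; case: (odd j) | lia].
Qed.

Definition cyc (t : word) i := nth false t (i %% size t).

Definition mu_fun (g : nat -> bool) n := if odd n then ~~ g n./2 else g n./2.

Lemma cyc_mod t i j : i = j %[mod size t] -> cyc t i = cyc t j.
Proof. by rewrite /cyc => ->. Qed.

Lemma cyc_addr t i : cyc t (i + size t) = cyc t i.
Proof. by apply: cyc_mod; rewrite modnDr. Qed.

Lemma cyc_nth t i : i < size t -> cyc t i = nth false t i.
Proof. by move=> h; rewrite /cyc modn_small. Qed.

Lemma mu_fun_double g j : mu_fun g j.*2 = g j.
Proof. by rewrite /mu_fun odd_double doubleK. Qed.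

Lemma mu_fun_doubleS g j : mu_fun g j.*2.+1 = ~~ g j.
Proof. by rewrite /mu_fun /= odd_double /= uphalf_double. Qed.

Lemma mu_fun_shift g m k : mu_fun g (m.*2 + k) = mu_fun (fun j => g (m + j)) k.
Proof.
rewrite /mu_fun oddD odd_double /=.
by have -> : (m.*2 + k)./2 = m + k./2 by lia.
Qed.

Lemma cyc_mu t i : t != [::] -> cyc (mu t) i = mu_fun (cyc t) i.
Proof.
move=> tn; have t0 : 0 < size t by case: t tn.
rewrite /cyc size_mu nth_mu; last by rewrite ltn_pmod // muln_gt0.
set q := i %/ (2 * size t); set r := i %% (2 * size t).
have Ei : i = 2 * (q * size t) + r by rewrite /q /r mulnCA -divn_eq.
have hr : r < 2 * size t by rewrite ltn_pmod // muln_gt0.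
have -> : odd r = odd i by rewrite Ei oddD oddM.
rewrite /mu_fun; have -> : i./2 = q * size t + r./2 by lia.
by rewrite modnMDl modn_small //; lia.
Qed.

Definition periodic_at (f : nat -> bool) i p L :=
  forall k, k + p < L -> f (i + k) = f (i + k + p).

Definition free_upto (f : nat -> bool) B :=
  forall i p L, 0 < p -> 7 * p <= 3 * L -> L <= B -> ~ periodic_at f i p L.

Definition periodic_atb (f : nat -> bool) i p L :=
  all (fun k => f (i + k) == f (i + k + p)) (iota 0 (L - p)).

Lemma periodic_atP f i p L : reflect (periodic_at f i p L) (periodic_atb f i p L).
Proof.
apply: (iffP allP) => [H k Hk|H k].
  by apply/eqP/H; rewrite mem_iota; lia.
by rewrite mem_iota => Hk; apply/eqP/H; lia.
Qed.

Lemma eq_free_upto f g B : f =1 g -> free_upto f B -> free_upto g B.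
Proof.
move=> E H i p L hp h7 hL hw; apply: (H i p L hp h7 hL) => k hk.
by rewrite !E; apply: hw.
Qed.

Lemma free_upto_le f B B' : B <= B' -> free_upto f B' -> free_upto f B.
Proof. by move=> hB H i p L hp h7 hL; apply: H => //; apply: leq_trans hB. Qed.

Lemma free_upto_cube f j : free_upto f 3 -> f j = f j.+1 -> f j.+1 = f j.+2 -> False.
Proof.
move=> Hf e1 e2; apply: (Hf j 1 3) => // k hk.
have [->|->] : k = 0 \/ k = 1 by lia.
  by rewrite !addn0 addn1.
by rewrite !addn1.
Qed.

Lemma mu_fun_period1 g i L : 3 <= L -> ~ periodic_at (mu_fun g) i 1 L.
Proof.
move=> hL hw; set j := (i + 1)./2.
have := hw (j.*2 - i) ltac:(lia); rewrite (_ : i + _ = j.*2); last by lia.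
by rewrite addn1 mu_fun_double mu_fun_doubleS; case: (g j).
Qed.

Lemma mu_fun_period3 g i L : 7 <= L -> ~ periodic_at (mu_fun g) i 3 L.
Proof.
move=> hL hw; set h := fun j => g (i./2 + j).
have W k : k + 3 < L -> mu_fun h (odd i + k) = mu_fun h (odd i + k + 3).
  move=> hk; have := hw k hk.
  rewrite -{1 2}(odd_double_half i) -!addnA.
  by rewrite (addnCA (odd i) _ k) (addnCA (odd i) _ (k + 3)) !mu_fun_shift.
have W0 := W 0 ltac:(lia); have W1 := W 1 ltac:(lia).
have W2 := W 2 ltac:(lia); have W3 := W 3 ltac:(lia).
move: W0 W1 W2 W3; rewrite /mu_fun; case: (odd i) => /=;
by case: (h 0); case: (h 1); case: (h 2); case: (h 3).
Qed.

Lemma mu_fun_odd_period_ge5 g i p L : free_upto g 3 -> odd p -> 5 <= p ->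
  7 * p <= 3 * L -> ~ periodic_at (mu_fun g) i p L.
Proof.
move=> Hg op p5 h7 hw; set j := (i + 1)./2; set q := p./2.
have Ep : p = q.*2.+1 by rewrite -{1}(odd_double_half p) op add1n.
(* Comparing positions 2j, ..., 2j+3 with their shift by the odd period
   forces the cube g(j+q) g(j+q+1) g(j+q+2). *)
have W t : t <= 3 -> mu_fun (fun x => g (j + x)) t = mu_fun (fun x => g (j + q + x)) t.+1.
  move=> ht; have := hw (j.*2 - i + t) ltac:(lia).
  rewrite (_ : i + _ = j.*2 + t); last by lia.
  by rewrite (_ : _ + p = (j + q).*2 + t.+1) ?mu_fun_shift //; lia.
have := @free_upto_cube g (j + q) Hg; move: (W 0 isT) (W 1 isT) (W 2 isT) (W 3 isT).
rewrite /mu_fun /= !addn0 !addn1 !addn2.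
case: (g j); case: (g j.+1); case: (g (j + q)); case: (g (j + q).+1);
case: (g (j + q).+2) => /= e0 e1 e2 e3 cube; (try discriminate); exact: cube.
Qed.

Lemma mu_fun_odd_period g i p L : free_upto g 3 -> odd p -> 7 * p <= 3 * L ->
  ~ periodic_at (mu_fun g) i p L.
Proof.
move=> Hg op h7; have [p1|[p3|p5]] : p = 1 \/ p = 3 \/ 5 <= p by move: op; lia.
- by rewrite p1; apply: mu_fun_period1; lia.
- by rewrite p3; apply: mu_fun_period3; lia.
- exact: mu_fun_odd_period_ge5.
Qed.

Lemma mu_fun_even_period g B i q L : free_upto g B -> 0 < q -> 7 * q.*2 <= 3 * L ->
  L <= B.*2 -> ~ periodic_at (mu_fun g) i q.*2 L.
Proof.
move=> Hg hq h7 hL hw.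
apply: (Hg i./2 q (minn ((i + L - 1)./2 - i./2 + 1) B)); try lia.
move=> k hk; set j := i./2 + k.
case: (leqP i j.*2) => h.
  have := hw (j.*2 - i) ltac:(lia); rewrite (_ : i + _ = j.*2); last by lia.
  by rewrite -doubleD !mu_fun_double.
have := hw 0 ltac:(lia); rewrite (_ : i + 0 = j.*2.+1); last by lia.
rewrite (_ : j.*2.+1 + q.*2 = (j + q).*2.+1); last by lia.
by rewrite !mu_fun_doubleS => /negb_inj.
Qed.

Lemma free_upto_mu g B : 3 <= B -> free_upto g B -> free_upto (mu_fun g) B.*2.
Proof.
move=> hB Hg i p L hp h7 hL.
case Op: (odd p); first by apply: mu_fun_odd_period => //; apply: free_upto_le Hg.
rewrite -(odd_double_half p) Op add0n in h7 *.
by apply: mu_fun_even_period Hg _ h7 hL; rewrite -(odd_double_half p) Op in hp; lia.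
Qed.

Definition cyc_free_uptob t B :=
  all (fun i => all (fun p => all (fun L => (7 * p <= 3 * L) ==> ~~ periodic_atb (cyc t) i p L)
    (iota 0 B.+1)) (iota 1 B)) (iota 0 (size t)).

Lemma periodic_at_cyc_mod t i p L :
  periodic_at (cyc t) i p L -> periodic_at (cyc t) (i %% size t) p L.
Proof.
move=> hw k hk; rewrite (@cyc_mod t (_ + k) (i + k)) ?modnDml //.
rewrite (@cyc_mod t (_ + k + p) (i + k + p)); first exact: hw.
by rewrite -!addnA modnDml.
Qed.

Lemma cyc_free_uptoP t B : 0 < size t -> reflect (free_upto (cyc t) B) (cyc_free_uptob t B).
Proof.
move=> t0; apply: (iffP allP) => [H i p L hp h7 hL /periodic_at_cyc_mod hw | H i _].
  have /allP/(_ p) := H (i %% size t) ltac:(by rewrite mem_iota add0n ltn_pmod).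
  move=> /(_ ltac:(rewrite mem_iota; lia))/allP/(_ L ltac:(rewrite mem_iota; lia)).
  by rewrite h7 => /periodic_atP.
apply/allP => p; rewrite mem_iota => hp; apply/allP => L; rewrite mem_iota => hL.
by apply/implyP => h7; apply/periodic_atP; apply: H; lia.
Qed.

Definition setA_roots : seq word :=
  [:: [:: false]; [:: true]; [:: false; true; false]; [:: true; false; true]].

Lemma cyc_iter_mu_free k (r : word) : r \in setA_roots ->
  free_upto (cyc (iter k mu r)) (2 * size (iter k mu r)).
Proof.
move=> Hr; have sz j : 0 < size (iter j mu r).
  by rewrite size_iter_mu muln_gt0 expn_gt0 /=; move: Hr; rewrite !inE => /or4P [] /eqP ->.
apply/cyc_free_uptoP => //.
have base : all (fun r => all (fun k => cyc_free_uptob (iter k mu r) (2 * size (iter k mu r)))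
  (iota 0 2)) setA_roots by vm_compute.
(* [free_upto_mu] needs [3 <= B], so the exponents 0 and 1 are checked directly. *)
case: k => [|k]; first by have /allP/(_ 0) := allP base r Hr; apply.
elim: k => [|k IH]; first by have /allP/(_ 1) := allP base r Hr; apply.
have t0 : iter k.+1 mu r != [::] by rewrite -size_eq0 -lt0n.
apply/cyc_free_uptoP => //; rewrite iterS size_mu [2 * (2 * _)]mul2n.
apply: (@eq_free_upto (mu_fun (cyc (iter k.+1 mu r)))) => [i|]; first by rewrite cyc_mu.
apply: free_upto_mu; first by have := sz k.+1; rewrite size_iter_mu expnS; lia.
exact/cyc_free_uptoP.
Qed.

Ltac case_letters f :=
  repeat match goal with |- context [f ?x] => case: (f x) end; rewrite /=; intuition;
  try discriminate.

Section Desubstitution.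

Variables (f : nat -> bool) (N : nat).
Hypothesis f_periodic : forall i, f (i + N) = f i.
Hypothesis N_ge7 : 7 <= N.
Hypothesis f_free : free_upto f N.

Definition twin i := f i = f i.+1.

Lemma no_twin_succ i : twin i -> twin i.+1 -> False.
Proof. by apply: free_upto_cube; apply: free_upto_le f_free; lia. Qed.

Lemma no_alternation i :
  f i != f i.+1 -> f i.+1 != f i.+2 -> f i.+2 != f i.+3 -> f i.+3 != f i.+4 -> False.
Proof.
move=> e1 e2 e3 e4; apply: (f_free (i := i) (p := 2) (L := 5)) => //; try lia.
by apply/periodic_atP; rewrite /periodic_atb /= ?addnS ?addn0; move: e1 e2 e3 e4; case_letters f.
Qed.

Lemma twin_periodic i : twin (i + N) <-> twin i.
Proof. by rewrite /twin -addSn !f_periodic. Qed.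

Lemma no_twin_shift3 i : twin i -> twin i.+3 -> False.
Proof.
(* Shift by the period so that the factor of length 7 may start at i - 1. *)
move=> /twin_periodic t1 /twin_periodic t2; set m := (i + N).-1.
rewrite (_ : i + N = m.+1) in t1; last by lia.
rewrite (_ : i.+3 + N = m.+4) in t2; last by lia.
apply: (f_free (i := m) (p := 3) (L := 7)) => //; try lia.
apply/periodic_atP; rewrite /periodic_atb /= ?addnS ?addn0.
move: (@no_twin_succ m) (@no_twin_succ m.+1) (@no_twin_succ m.+2) (@no_twin_succ m.+3)
  (@no_twin_succ m.+4) t1 t2; rewrite /twin; case_letters f.
Qed.

Lemma twin_next i : twin i -> twin i.+2 \/ twin i.+4.
Proof.
move=> t; case: (@eqP _ (f i.+2) (f i.+3)) => [|n2]; first by left.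
case: (@eqP _ (f i.+4) (f i.+4.+1)) => [|n4]; first by right.
exfalso; apply: (@no_alternation i.+1); apply/eqP => //.
- by move=> t'; apply: (@no_twin_succ i).
- by move=> t'; apply: (@no_twin_shift3 i).
Qed.

Lemma no_twin_odd_gap j i : twin i -> ~ twin (i + j.*2.+1).
Proof.
elim/ltn_ind: j i => -[|[|j]] IH i t.
- by rewrite addn1; apply: no_twin_succ.
- by rewrite (_ : i + _ = i.+3); [apply: no_twin_shift3 | lia].
- case: (twin_next t) => t'.
    by rewrite (_ : i + _ = i.+2 + j.+1.*2.+1); [apply: IH | lia].
  by rewrite (_ : i + _ = i.+4 + j.*2.+1); [apply: IH | lia].
Qed.

Lemma twin_exists : exists d, twin d.
Proof.
case: (@eqP _ (f 0) (f 1)) => [|n0]; first by exists 0.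
case: (@eqP _ (f 1) (f 2)) => [|n1]; first by exists 1.
case: (@eqP _ (f 2) (f 3)) => [|n2]; first by exists 2.
case: (@eqP _ (f 3) (f 4)) => [|n3]; first by exists 3.
by exfalso; apply: (@no_alternation 0); apply/eqP.
Qed.

Lemma twin_parity d e : twin d -> twin e -> odd d = odd e.
Proof.
wlog le_de : d e / d <= e.
  by move=> W td te; case: (leqP d e) => h; [|symmetry]; apply: W => //; lia.
move=> td te; case Ho: (odd (e - d)); last by rewrite -(subnK le_de) oddD Ho.
exfalso; apply: (no_twin_odd_gap (j := (e - d)./2) td).
by rewrite (_ : d + _ = e) //; move: Ho; lia.
Qed.

Lemma period_even : ~~ odd N.
Proof.
have [d td] := twin_exists.
by have := twin_parity td (proj2 (twin_periodic d) td); rewrite oddD; case: (odd d); case: (odd N).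
Qed.

Lemma desubstitution : exists r g, [/\ r <= 1, forall n, f (r + n) = mu_fun g n,
  forall j, g (j + N./2) = g j & free_upto g N./2].
Proof.
have [d td] := twin_exists.
pose r : nat := ~~ odd d; pose g j := f (r + j.*2).
have no_twin j : ~ twin (r + j.*2).
  by move=> t; have := twin_parity td t; rewrite oddD odd_double addbF /r oddb; case: (odd d).
have NE : N = (N./2).*2 by have := period_even; lia.
have fg n : f (r + n) = mu_fun g n.
  rewrite /mu_fun /g -{1}(odd_double_half n); case: (odd n); last by rewrite add0n.
  by move: (no_twin n./2); rewrite /twin addnCA add1n; case: (f _); case: (f _).
exists r, g; split => //; first by rewrite /r; case: (odd d).
  by move=> j; rewrite /g (_ : r + _ = r + j.*2 + N) ?f_periodic //; lia.
move=> i p L hp h7 hL hw.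
apply: (f_free (i := r + i.*2) (p := p.*2) (L := L.*2)); try lia.
move=> k hk; rewrite (_ : r + i.*2 + k + p.*2 = r + ((i + p).*2 + k)); last by lia.
rewrite -addnA !fg !mu_fun_shift /mu_fun (_ : i + p + k./2 = i + k./2 + p); last by lia.
by rewrite hw //; lia.
Qed.

End Desubstitution.

Definition small_words : seq word := setA_roots ++ setA.

Definition iter_mu_rotation (f : nat -> bool) N := exists k a s,
  [/\ a \in small_words, size (iter k mu a) = N & forall i, f i = cyc (iter k mu a) (i + s)].

(* Exponents k < 3 suffice for the lengths at most 6 where this test is used. *)
Definition iter_mu_rotationb (x : word) :=
  has (fun ka => let t := iter ka.1 mu ka.2 in
    (size t == size x) && has (fun s => all (fun i => cyc x i == cyc t (i + s))
      (iota 0 (size x))) (iota 0 (size x)))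
  [seq (k, a) | k <- iota 0 3, a <- small_words].

Lemma iter_mu_rotation_cyc x : 0 < size x -> iter_mu_rotationb x -> iter_mu_rotation (cyc x) (size x).
Proof.
move=> x0 /hasP [_ /allpairsP [[k a] [_ /= Ha ->]]] /= /andP [/eqP Hs] /hasP [s _] /allP Hi.
exists k, a, s; split => // i.
rewrite (@cyc_mod x i (i %% size x)) ?modn_mod //.
rewrite (eqP (Hi (i %% size x) _)); last by rewrite mem_iota add0n ltn_pmod.
by apply: cyc_mod; rewrite Hs modnDml.
Qed.

Fixpoint all_words n : seq word :=
  if n is n'.+1 then [seq b :: x | b <- [:: false; true], x <- all_words n'] else [:: [::]].

Lemma mem_all_words x : x \in all_words (size x).
Proof. by elim: x => [|b x IH] //=; rewrite !mem_cat; case: b; rewrite map_f ?orbT. Qed.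

Lemma short_free_words_check :
  all (fun n => all (fun x => cyc_free_uptob x n ==> iter_mu_rotationb x) (all_words n)) (iota 1 6).
Proof. by vm_compute. Qed.

Lemma periodicMn (f : nat -> bool) N c j : (forall i, f (i + N) = f i) -> f (j + c * N) = f j.
Proof.
move=> fN; elim: c => [|c IH]; first by rewrite addn0.
by rewrite mulSn addnCA addnC fN.
Qed.

Lemma periodic_cyc_mkseq (f : nat -> bool) N i : 0 < N -> (forall i, f (i + N) = f i) ->
  f i = cyc (mkseq f N) i.
Proof.
move=> N0 fN; rewrite /cyc size_mkseq nth_mkseq; last by rewrite ltn_pmod.
by rewrite {1}(divn_eq i N) addnC periodicMn.
Qed.

Lemma short_free_iter_mu_rotation (f : nat -> bool) N : 0 < N <= 6 ->
  (forall i, f (i + N) = f i) -> free_upto f N -> iter_mu_rotation f N.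
Proof.
move=> /andP [N0 N6] fN Hf; set x := mkseq f N.
have Ef i : f i = cyc x i := periodic_cyc_mkseq i N0 fN.
have sx : size x = N by rewrite size_mkseq.
have : iter_mu_rotationb x.
  have /allP/(_ N) := short_free_words_check.
  move=> /(_ ltac:(by rewrite mem_iota; lia))/allP/(_ x).
  rewrite -{1}sx mem_all_words => /(_ isT)/implyP; apply.
  by apply/(cyc_free_uptoP _ (_ : 0 < size x)); [rewrite sx | apply: eq_free_upto Hf].
move=> /(iter_mu_rotation_cyc (x := x)); rewrite sx => /(_ N0) [k [a [s [Ha Hs Hi]]]].
by exists k, a, s; split => // i; rewrite Ef Hi.
Qed.

Lemma free_iter_mu_rotation N (f : nat -> bool) : 0 < N ->
  (forall i, f (i + N) = f i) -> free_upto f N -> iter_mu_rotation f N.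
Proof.
elim/ltn_ind: N f => N IH f N0 fN Hf.
have [N6|N7] := leqP N 6; first by apply: short_free_iter_mu_rotation => //; rewrite N0.
have [r [g [r1 Efg gN Hg]]] := desubstitution fN N7 Hf.
have NE : N = (N./2).*2 by have := period_even fN N7 Hf; lia.
have [k [a [s [Ha Hs Hi]]]] := IH N./2 ltac:(lia) g ltac:(lia) gN Hg.
exists k.+1, a, (N - r + s.*2); split => //; first by rewrite iterS size_mu Hs; lia.
move=> i; rewrite iterS cyc_mu; last by rewrite -size_eq0 Hs; lia.
rewrite -fN (_ : i + N = r + (i + N - r)); last by lia.
rewrite Efg /mu_fun (_ : i + (N - r + s.*2) = i + N - r + s.*2); last by lia.
by rewrite oddD odd_double addbF (_ : (_ + s.*2)./2 = (i + N - r)./2 + s) -?Hi //; lia.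
Qed.

Lemma size_flatten_nseq (x : word) n : size (flatten (nseq n x)) = n * size x.
Proof. by elim: n => //= n IH; rewrite size_cat IH mulSn. Qed.

Lemma nth_flatten_nseq (x : word) n k : k < n * size x ->
  nth false (flatten (nseq n x)) k = nth false x (k %% size x).
Proof.
elim: n k => [|n IH] k /=; first by rewrite mul0n.
move=> hk; rewrite nth_cat; case: (ltnP k (size x)) => h; first by rewrite modn_small.
rewrite IH; last by rewrite mulSn in hk; lia.
by rewrite -{2}(subnK h) modnDr.
Qed.

Lemma ratio_ge_7_3 (n p : nat) : 0 < p ->
  ((7%:R / 3%:R : rat) <= n%:R / p%:R)%R = (7 * p <= 3 * n).
Proof.
move=> hp; rewrite ler_pdivlMr ?ltr0n // mulrAC ler_pdivrMr ?ltr0n //.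
by rewrite -!natrM ler_nat mulnC [n * 3]mulnC.
Qed.

Lemma natr_add_ratio (n r p : nat) : 0 < p ->
  (n%:R + r%:R / p%:R : rat)%R = ((n * p + r)%:R / p%:R)%R.
Proof. by move=> hp; rewrite natrD natrM mulrDl mulfK // pnatr_eq0 -lt0n. Qed.

Definition has_period (y : word) p :=
  forall k, k + p < size y -> nth false y k = nth false y (k + p).

Lemma has_period_mod y p : 0 < p -> has_period y p ->
  forall k, k < size y -> nth false y k = nth false y (k %% p).
Proof.
move=> hp H; elim/ltn_ind => k IH hk.
case: (ltnP k p) => h; first by rewrite modn_small.
rewrite -(subnK h) -H; last by rewrite subnK.
by rewrite IH ?modnDr //; lia.
Qed.

Lemma has_period_power y p : 0 < p -> p <= size y -> has_period y p ->
  is_power ((size y)%:R / p%:R)%R y.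
Proof.
move=> hp hpy H; set x := take p y; set r := size y %% p.
have sx : size x = p by rewrite size_takel.
have hr : r < p by rewrite ltn_pmod.
exists x, (take r x), (size y %/ p); split.
- by rewrite -size_eq0 sx -lt0n.
- exact: prefix_take.
- apply: (@eq_from_nth _ false) => [|k hk].
    by rewrite size_cat size_flatten_nseq sx size_takel ?sx 1?ltnW // -divn_eq.
  rewrite (has_period_mod hp H hk) nth_cat size_flatten_nseq sx.
  case: (ltnP k (size y %/ p * p)) => h.
    by rewrite nth_flatten_nseq sx // nth_take // ltn_pmod.
  have hkr : k - size y %/ p * p < r by move: hk; rewrite {1}(divn_eq (size y) p); lia.
  rewrite !nth_take //; last exact: ltn_trans hr.
  by rewrite -{1}(subnK h) addnC modnMDl modn_small // (ltn_trans hkr).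
- by rewrite sx size_takel ?sx 1?ltnW // natr_add_ratio // -divn_eq.
Qed.

Lemma is_power_has_period beta y : is_power beta y ->
  exists2 p, 0 < p & beta = ((size y)%:R / p%:R)%R /\ has_period y p.
Proof.
case=> [x [x' [n [xn px' Ey ->]]]].
have hp : 0 < size x by rewrite lt0n size_eq0.
have sx' : size x' <= size x by apply: size_prefix.
have ny k : k < size y -> nth false y k = nth false x (k %% size x).
  rewrite Ey size_cat size_flatten_nseq nth_cat size_flatten_nseq => hk.
  case: (ltnP k (n * size x)) => h; first by rewrite nth_flatten_nseq.
  have <- : take (size x') x = x' by move: px'; rewrite prefixE => /eqP.
  rewrite nth_take; last by lia.
  by congr nth; rewrite -{2}(subnK h) addnC modnMDl modn_small //; lia.
exists (size x) => //; split.
  by rewrite natr_add_ratio // Ey size_cat size_flatten_nseq.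
by move=> k hk; rewrite !ny ?modnDr //; lia.
Qed.

Lemma power_free_73P w : power_free (7%:R / 3%:R)%R w <->
  (forall (y : word) p, infix y w -> 0 < p -> 7 * p <= 3 * size y -> ~ has_period y p).
Proof.
split=> [Hf y p Hi hp h7 Hy | H y beta Hi Hb /is_power_has_period [p hp [Eb Hy]]].
  apply: (Hf y ((size y)%:R / p%:R)%R Hi); first by rewrite ratio_ge_7_3.
  by apply: has_period_power => //; lia.
by apply: (H y p) => //; rewrite -ratio_ge_7_3 // -Eb.
Qed.

Lemma nth_cat_self (x : word) j : j < 2 * size x -> nth false (x ++ x) j = cyc x j.
Proof.
move=> hj; rewrite nth_cat; case: (ltnP j (size x)) => h; first by rewrite cyc_nth.
rewrite -cyc_nth; last by lia.
by rewrite -cyc_addr subnK.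
Qed.

Lemma cyc_cat_self (u : word) j : cyc (u ++ u) j = cyc u j.
Proof.
case: u => [|b u] //; rewrite {1}/cyc size_cat nth_cat_self.
  by apply: cyc_mod; rewrite modn_dvdm // dvdn_addr.
by rewrite (leq_trans (ltn_pmod _ _)) //; lia.
Qed.

Lemma cyc_shift_rot (x t : word) s : size t = size x -> 0 < size x ->
  (forall i, cyc x i = cyc t (i + s)) -> x = rot (s %% size x) t.
Proof.
move=> st x0 H; set s' := s %% size x; have hs : s' < size x by rewrite ltn_pmod.
apply: (@eq_from_nth _ false) => [|i hi]; first by rewrite size_rot st.
rewrite -cyc_nth // H (@cyc_mod t (i + s) (i + s')) ?st ?modnDmr // /rot nth_cat size_drop st.
case: (ltnP i (size x - s')) => h.
  by rewrite nth_drop cyc_nth 1?addnC // st; lia.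
rewrite nth_take; last by lia.
by rewrite (_ : i + s' = i - (size x - s') + size t) ?cyc_addr ?cyc_nth //; lia.
Qed.

Lemma conjugate_rot_square n (t : word) : conjugate (rot n t ++ rot n t) (t ++ t).
Proof.
exists (take n t), (drop n t ++ t); split; first by rewrite catA cat_take_drop.
by rewrite /rot -!catA [take n t ++ _]catA cat_take_drop.
Qed.

Lemma nth_conjugate_square (t u v : word) j : t ++ t = u ++ v -> j < size (v ++ u) ->
  nth false (v ++ u) j = cyc t (j + size u).
Proof.
move=> E hj; have sz : size u + size v = 2 * size t by rewrite -size_cat -E size_cat; lia.
rewrite size_cat in hj; rewrite nth_cat; case: (ltnP j (size v)) => h.
  have -> : nth false v j = nth false (u ++ v) (j + size u).
    by rewrite nth_cat ltnNge leq_addl /= addnK.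
  by rewrite -E nth_cat_self //; lia.
have -> : nth false u (j - size v) = nth false (u ++ v) (j - size v) by rewrite nth_cat ifT //; lia.
rewrite -E nth_cat_self; last by lia.
by rewrite (_ : j + size u = j - size v + size t + size t) ?cyc_addr //; lia.
Qed.

Lemma setA_rootsP (a : word) : a \in setA -> exists2 r : word, r \in setA_roots & a = r ++ r.
Proof.
rewrite !inE => /or4P [] /eqP ->.
- by exists [:: false].
- by exists [:: true].
- by exists [:: false; true; false].
- by exists [:: true; false; true].
Qed.

Lemma cat_self_setA r : r \in setA_roots -> r ++ r \in setA.
Proof. by rewrite !inE => /or4P [] /eqP ->. Qed.

Lemma square_free_cyc_free (x : word) : 0 < size x ->
  power_free (7%:R / 3%:R)%R (x ++ x) -> free_upto (cyc x) (size x).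
Proof.
move=> x0 /power_free_73P Hf i p L hp h7 hL /periodic_at_cyc_mod hw.
set j := i %% size x; have hj : j < size x by rewrite ltn_pmod.
set y := take L (drop j (x ++ x)).
have sy : size y = L by rewrite size_takel // size_drop size_cat; lia.
apply: (Hf y p) => //; [|by rewrite sy|move=> k; rewrite sy => hk].
  apply/infixP; exists (take j (x ++ x)), (drop L (drop j (x ++ x))).
  by rewrite /y !cat_take_drop.
rewrite !nth_take ?nth_drop; try lia.
by rewrite !nth_cat_self ?addnA ?hw //; lia.
Qed.

Lemma free_square_conjugate_setA (x : word) : 0 < size x ->
  power_free (7%:R / 3%:R)%R (x ++ x) ->
  exists k a, a \in setA /\ conjugate (x ++ x) (iter k mu a).
Proof.
move=> x0 Hf.
have [k [a [s [Ha Hs Hi]]]] :=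
  free_iter_mu_rotation x0 (cyc_addr x) (square_free_cyc_free x0 Hf).
move: Ha; rewrite mem_cat => /orP [Hr | /setA_rootsP [r _ Ea]].
  exists k, (a ++ a); split; first exact: cat_self_setA.
  by rewrite iter_mu_cat (cyc_shift_rot Hs x0 Hi); apply: conjugate_rot_square.
move: Hi Hs; rewrite Ea iter_mu_cat size_cat; set t := iter k mu r => Hi Hs.
have Hx i : cyc x i = cyc t (i + s) by rewrite Hi cyc_cat_self.
exfalso; move/power_free_73P: Hf => Hf.
apply: (Hf (x ++ x) (size t)); rewrite ?infix_refl ?size_cat; try lia.
move=> j; rewrite size_cat => hj; rewrite !nth_cat_self; try lia.
by rewrite !Hx addnAC cyc_addr.
Qed.

Lemma conjugate_square_square (w t : word) : 0 < size t -> conjugate w (t ++ t) -> square w.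
Proof.
move=> t0 [u [v [E ->]]].
have sw : size (v ++ u) = 2 * size t by rewrite size_cat addnC -size_cat -E size_cat; lia.
have st : size (take (size t) (v ++ u)) = size t by rewrite size_takel // sw; lia.
exists (take (size t) (v ++ u)); split; first by rewrite -size_eq0 st; lia.
apply: (@eq_from_nth _ false) => [|j hj]; first by rewrite sw size_cat st; lia.
rewrite [RHS]nth_cat st; case: (ltnP j (size t)) => h; first by rewrite nth_take.
rewrite nth_take; last by lia.
rewrite !(nth_conjugate_square E) ?sw; try lia.
by rewrite (_ : j + size u = j - size t + size u + size t) ?cyc_addr //; lia.
Qed.

Lemma conjugate_square_free (w t : word) : 0 < size t ->
  free_upto (cyc t) (2 * size t) -> conjugate w (t ++ t) -> power_free (7%:R / 3%:R)%R w.
Proof.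
move=> t0 Ht [u [v [E ->]]]; apply/power_free_73P => y p /infixP [s1 [s2 Ey]] hp h7 Hy.
have sw : size (v ++ u) = 2 * size t by rewrite size_cat addnC -size_cat -E size_cat; lia.
have sy : size s1 + size y + size s2 = 2 * size t by rewrite -sw Ey !size_cat addnA.
have ny j : j < size y -> cyc t (size s1 + size u + j) = nth false y j.
  move=> hj; have -> : nth false y j = nth false (v ++ u) (size s1 + j).
    by rewrite Ey nth_cat ltnNge leq_addr /= addKn nth_cat hj.
  by rewrite (nth_conjugate_square E) ?sw; [congr cyc | ]; lia.
apply: (Ht (size s1 + size u) p (size y)) => //; first lia.
move=> j hj; rewrite -[_ + j + p]addnA !ny; try lia.
exact: Hy.
Qed.

Theorem theorem2 : forall w : word,
  (square w /\ power_free (7%:R / 3%:R)%R w) <-> (exists x : word, in_calA x /\ conjugate w x).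
Proof.
move=> w; split.
  case=> [[x [xn ->]] Hf]; have x0 : 0 < size x by rewrite lt0n size_eq0.
  have [k [a [Ha Hc]]] := free_square_conjugate_setA x0 Hf.
  by exists (iter k mu a); split => //; exists k, a.
case=> _ [[k [_ [/setA_rootsP [r Hr ->] ->]]]]; rewrite iter_mu_cat => Hc.
have t0 : 0 < size (iter k mu r).
  by rewrite size_iter_mu muln_gt0 expn_gt0; move: Hr; rewrite !inE => /or4P [] /eqP ->.
split; first exact: conjugate_square_square t0 Hc.
apply: (conjugate_square_free t0 _ Hc).
exact: cyc_iter_mu_free.
Qed.
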